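(* Let $g:(0,\infty)\to(0,\infty)$ decrease monotonically to zero, let $k\in\mathbb N$ with $k\ge2$, and let $\mathfrak N=\{e\in\mathfrak E_d: 0\in e\}$. If there exist $\epsilon>0$ and $n^*\in\mathbb N$ such that $\Lambda_g(n)/\log\log n\ge k+\epsilon$ for all $n\ge n^*$, then for every $A\in\{A_{1,k},\dots,A_{k,k}\}$ $$\mathbb P\Big[\limsup_{n\to\infty}\bigcap_{z\in B_n\cap A}J_{g(n)}(\mathfrak N\circ\tau_z)\Big]=0,$$ i.e., $\mathbb P$-a.s. for $n$ large enough there is a site $z_n\in B_n\cap A$ all of whose incident edges have conductance $\le g(n)$. Consequently, $\mathbb P$-a.s. for $n$ large enough there exist $k$ distinct sites $z_{(1,n)},\dots,z_{(k,n)}\in B_n$ with $\pi_{z_{(i,n)}}\le 2d\,g(n)$ for all $i\le k$.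
   Context: Let $d\ge2$, $\mathfrak E_d$ the nearest-neighbour edges of $\mathbb Z^d$, $x\sim y$ if $|x-y|_1=1$. Conductances $(w_e)_{e\in\mathfrak E_d}$ are i.i.d. $(0,\infty)$-valued with law $\mathbb P$; $w$ a generic copy. $B_n=[-n,n]^d\cap\mathbb Z^d$, $\pi_x=\sum_{y\sim x}w_{xy}$, $\Lambda_g(u)=u^d\,\mathbb P[w\le g(u)]^{2d}$. $J_\alpha(\mathfrak A)=\{\exists e\in\mathfrak A: w_e>\alpha\}$; $\mathfrak A\circ\tau_z=\{\{x+z,y+z\}:\{x,y\}\in\mathfrak A\}$. For $1\le i\le k$, $A_{i,k}=\{z\in\mathbb Z^d: z_1+\dots+z_d\equiv i \bmod k\}$. $\limsup_n E_n=\bigcap_n\bigcup_{k\ge n}E_k$. *)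

From HB Require Import structures.
From mathcomp Require Import all_boot all_order all_algebra.
From mathcomp Require Import all_classical all_reals all_analysis.
Set Implicit Arguments. Unset Strict Implicit. Unset Printing Implicit Defensive.
Import Order.TTheory GRing.Theory Num.Theory.
Local Open Scope classical_set_scope.
Local Open Scope ring_scope.

Definition site (d : nat) := {ffun 'I_d -> int}.

(* Nearest-neighbour edges of Z^d: the pair (x, i) encodes the edge
   {x, x + e_i}; this is a bijective parametrization of E_d. *)
Definition edge (d : nat) := (site d * 'I_d)%type.

Definition shiftp (d : nat) (x : site d) (i : 'I_d) (s : int) : site d :=
  [ffun j => x j + (if j == i then s else 0)].

Definition endpoint (d : nat) (z : site d) (e : edge d) : Prop :=
  z = e.1 \/ z = shiftp e.1 e.2 1.

Definition box (d n : nat) : set (site d) :=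
  [set z | forall j, `|z j| <= n%:Z].

Definition Aset (d i k : nat) : set (site d) :=
  [set z | (\sum_j z j == i%:Z %[mod k%:Z])%Z].

Definition limsup_ev (T : Type) (E : nat -> set T) : set T :=
  \bigcap_n \bigcup_(m in [set m | (n <= m)%N]) E m.

Definition J_at (R : realType) (T : Type) (d : nat) (w : edge d -> T -> R)
    (alpha : R) (z : site d) : set T :=
  [set om | exists e : edge d, endpoint z e /\ alpha < w e om].

(* pi_z = sum of conductances of the 2d edges incident to z:
   edges (z,i) = {z, z+e_i} and (z - e_i, i) = {z - e_i, z} *)
Definition pi_at (R : realType) (T : Type) (d : nat) (w : edge d -> T -> R)
    (z : site d) (om : T) : R :=
  \sum_(i < d) (w (z, i) om + w (shiftp z i (-1), i) om).

Definition mutually_independent (R : realType) (dT : measure_display)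
    (T : measurableType dT) (P : probability T R) (I : eqType)
    (X : I -> T -> R) : Prop :=
  forall (s : seq I) (B : I -> set R),
    uniq s -> (forall i, measurable (B i)) ->
    P (\bigcap_(i in [set i | i \in s]) (X i @^-1` B i)) =
    (\prod_(i <- s) P (X i @^-1` B i))%E.

(* Lambda_g(u) = u^d * P[w <= g(u)]^(2d), with mu the law of w *)
Definition Lambda (R : realType) (mu : probability R R) (g : R -> R)
    (d : nat) (u : R) : R :=
  u ^+ d * (fine (mu `]-oo, g u]%classic)) ^+ (2 * d).
Arguments box : clear implicits.
Arguments Aset : clear implicits.

From HB Require Import structures.
From mathcomp Require Import all_boot all_order all_algebra.
From mathcomp Require Import all_classical all_reals all_analysis.
From mathcomp Require Import zify ring lra.
Import Order.TTheory GRing.Theory Num.Theory.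
Local Open Scope classical_set_scope.
Local Open Scope ring_scope.
Set Implicit Arguments. Unset Strict Implicit. Unset Printing Implicit Defensive.

(* Sites of one residue class A_{i,k} are pairwise non-adjacent (k >= 2), so
   for the sites z of B_M ∩ A_{i,k} the events "some edge at z has conductance
   > a" only involve disjoint sets of edges: they are independent, each of
   probability 1 - q^(2d) with q = P[w <= a].  Along the radii
   N_(j+1) = N_j + N_j/4, the set B_(N_j) ∩ A_{i,k} has at least
   2 N_(j+1)^d / k sites, so the hypothesis on Lambda_g bounds the probability
   that each of them has an edge of conductance > g(N_(j+1)) by
   exp (-2 log log N_(j+1)) = O(j^-2).  Borel-Cantelli, with the monotonicity of
   g and of B_n between consecutive radii, gives the first claim; choosing one
   low site in each of the k classes gives the second. *)

Section CountableMeasurable.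
Context (dT : measure_display) (T : measurableType dT) (U : countType).
Implicit Types (D : set U) (F : U -> set T).

Lemma countable_bigcup_measurable D F :
  (forall i, D i -> measurable (F i)) -> measurable (\bigcup_(i in D) F i).
Proof.
move=> mF; rewrite bigcup_mkcond; apply: countable_bigcupT_measurable.
  exact: countableP.
by move=> i; case: ifPn => [/set_mem /mF|_].
Qed.

Lemma countable_bigcap_measurable D F :
  (forall i, D i -> measurable (F i)) -> measurable (\bigcap_(i in D) F i).
Proof.
move=> mF; rewrite -[X in measurable X]setCK setC_bigcap; apply: measurableC.
by apply: countable_bigcup_measurable => i /mF /measurableC.
Qed.

End CountableMeasurable.

Lemma limsup_ev_bigcup (T : Type) (K : finType) (G : K -> nat -> set T) :
  limsup_ev (fun n => \bigcup_i G i n) `<=` \bigcup_i limsup_ev (G i).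
Proof.
move=> om Gom; apply: contrapT => noG.
have evG i : \forall n \near \oo, ~ G i n om.
  have /existsNP [N /= notG] : ~ limsup_ev (G i) om by move=> Gi; apply: noG; exists i.
  by exists N => // n /= Nn Gn; apply: notG; exists n.
have [N _ notG] := filter_forall _ evG.
by have [m /= Nm [i _]] := Gom N I; exact: notG.
Qed.

Lemma measurable_limsup_ev (dT : measure_display) (T : measurableType dT)
    (F : nat -> set T) :
  (forall n, measurable (F n)) -> measurable (limsup_ev F).
Proof. by move=> mF; apply: bigcapT_measurable => n; apply: bigcup_measurable. Qed.

Section Sites.
Variable d : nat.
Implicit Types (z x : site d) (e : edge d) (S : seq (site d)).

Lemma shiftpD z i a b : shiftp (shiftp z i a) i b = shiftp z i (a + b).
Proof. by apply/ffunP => j; rewrite !ffunE; case: (j == i); rewrite ?addr0 // addrA. Qed.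

Lemma shiftp0 z i : shiftp z i 0 = z.
Proof. by apply/ffunP => j; rewrite !ffunE; case: (j == i); rewrite addr0. Qed.

Lemma sum_shiftp z i s : \sum_j shiftp z i s j = \sum_j z j + s.
Proof.
under eq_bigr do rewrite ffunE.
rewrite big_split /=; congr (_ + _).
by rewrite (bigD1 i) //= eqxx big1 ?addr0 // => j /negbTE ->.
Qed.

Definition incident z : seq (edge d) :=
  [seq (z, i) | i <- enum 'I_d] ++ [seq (shiftp z i (-1), i) | i <- enum 'I_d].

Lemma mem_incident z e : e \in incident z <-> endpoint z e.
Proof.
case: e => x i; rewrite mem_cat; split.
- case/orP => /mapP [j _ [-> ->]]; [by left | right].
  by rewrite /= shiftpD addNr shiftp0.
- case => /= ->; apply/orP; [left|right]; apply/mapP; exists i; rewrite ?mem_enum //.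
  by rewrite shiftpD addrN shiftp0.
Qed.

Lemma uniq_incident z : uniq (incident z).
Proof.
have inj_l : injective (fun i : 'I_d => (z, i)) by move=> i j [].
have inj_r : injective (fun i : 'I_d => (shiftp z i (-1), i)) by move=> i j [].
rewrite cat_uniq !map_inj_uniq // -enumT enum_uniq /= andbT.
apply/hasPn => _ /mapP [i _ ->].
apply/negP => /mapP [j _ [/ffunP /(_ i)]]; rewrite ffunE eqxx => /eqP.
by rewrite -subr_eq0 addrAC subrr add0r oppr_eq0 oner_eq0.
Qed.

Lemma size_incident z : size (incident z) = (2 * d)%N.
Proof. by rewrite size_cat !size_map -enumT size_enum_ord addnn mul2n. Qed.

Definition nbhd S : seq (edge d) := flatten [seq incident z | z <- S].

Lemma uniq_nbhd S : uniq S ->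
  {in S &, forall z z' e, endpoint z e -> endpoint z' e -> z = z'} ->
  uniq (nbhd S).
Proof.
elim: S => [//|z S IH] /= /andP [zS uS] shared.
rewrite cat_uniq uniq_incident IH ?andbT //=; last first.
  by move=> x y xS yS; apply: shared; rewrite inE ?xS ?yS orbT.
apply/hasPn => e /flattenP [_ /mapP [y yS ->] /mem_incident ye].
apply/negP => /mem_incident ze.
have zy : z = y by apply: shared ze ye; rewrite inE ?yS ?eqxx ?orbT.
by rewrite zy yS in zS.
Qed.

Section ResidueClasses.
Variables (i k : nat).
Hypothesis k_gt1 : (1 < k)%N.

Lemma Aset_shiftp1 x j : Aset d i k x -> ~ Aset d i k (shiftp x j 1).
Proof.
move=> /eqP Ax /eqP; rewrite sum_shiftp => Ax1.
have : (k%:Z %| (\sum_j0 x j0 + 1) - \sum_j0 x j0)%Z by rewrite -eqz_mod_dvd Ax1 Ax.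
by rewrite addrC addKr dvdz1 absz_nat => /eqP k1; move: k_gt1; rewrite k1.
Qed.

Lemma Aset_endpoint_eq z z' e : Aset d i k z -> Aset d i k z' ->
  endpoint z e -> endpoint z' e -> z = z'.
Proof.
move=> Az Az'; case: e => x j [] /= ez [] /= ez'; rewrite {}ez {}ez' in Az Az' *.
all: by [|case: (Aset_shiftp1 Az Az')|case: (Aset_shiftp1 Az' Az)].
Qed.

End ResidueClasses.

Lemma Aset_mod x i i' k : Aset d i k x -> Aset d i' k x -> i = i' %[mod k].
Proof. by move=> /eqP; rewrite /Aset /= => -> /eqP; rewrite !modz_nat => -[]. Qed.

End Sites.

Section ResidueClassCount.
Variables (d k M i : nat).
Hypothesis k_gt0 : (0 < k)%N.
Let m := (2 * M + 1)%N.

Definition class_offset (y : {ffun 'I_d -> 'I_m}) : int :=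
  ((i%:Z + M%:Z - \sum_j ((y j)%:Z - M%:Z)) %% k%:Z)%Z.

(* The last [d] coordinates of the site are free in [[-M, M]]; the first one
   is [k t + c - M], the offset [c < k] fixing the residue of the coordinate sum. *)
Definition class_site (p : 'I_(m %/ k) * {ffun 'I_d -> 'I_m}) : site d.+1 :=
  [ffun j => if unlift ord0 j is Some j' then (p.2 j')%:Z - M%:Z
             else (k * p.1)%:Z + class_offset p.2 - M%:Z].

Lemma class_site0 p : class_site p ord0 = (k * p.1)%:Z + class_offset p.2 - M%:Z.
Proof. by rewrite ffunE unlift_none. Qed.

Lemma class_siteS p j : class_site p (lift ord0 j) = (p.2 j)%:Z - M%:Z.
Proof. by rewrite ffunE liftK. Qed.

Lemma class_offset_ge0 y : 0 <= class_offset y.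
Proof. by rewrite modz_ge0 // eqz_nat -lt0n. Qed.

Lemma class_offset_lt y : class_offset y < k%:Z.
Proof. by rewrite ltz_pmod // ltz_nat. Qed.

Lemma class_site_inj : injective class_site.
Proof.
move=> [t y] [t' y'] eq_site.
have eq_y : y = y'.
  apply/ffunP => j.
  by have := class_siteS (t, y) j; rewrite eq_site class_siteS => /addIr [] /val_inj.
rewrite -{}eq_y in eq_site *; congr (_, _); apply/val_inj/eqP.
rewrite -(eqn_pmul2l k_gt0) -eqz_nat.
by have := class_site0 (t, y); rewrite eq_site class_site0 => /addIr /addIr <-.
Qed.

Lemma class_site_box p : box d.+1 M (class_site p).
Proof.
case: p => t y j; rewrite ler_norml.
case: (unliftP ord0 j) => [j'|] ->; [rewrite class_siteS | rewrite class_site0] => /=.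
  by have := ltn_ord (y j'); rewrite /m; move: (nat_of_ord (y j')) => a; lia.
have := class_offset_ge0 y; have := class_offset_lt y.
have : (k * t.+1 <= m)%N.
  by rewrite (leq_trans _ (leq_trunc_div m k)) // mulnC leq_mul2r ltn_ord orbT.
rewrite /m; move: (class_offset y) (nat_of_ord t) => c n; lia.
Qed.

Lemma class_site_Aset p : Aset d.+1 i k (class_site p).
Proof.
case: p => t y; rewrite /Aset /= big_ord_recl class_site0.
under eq_bigr do rewrite class_siteS.
rewrite /class_offset; set s := \sum_j _.
have := divz_eq (i%:Z + M%:Z - s) k%:Z; set q := (_ %/ _)%Z; set c := (_ %% _)%Z.
move=> def_c; have -> : (k * t)%:Z + c - M%:Z + s = (t%:Z - q) * k%:Z + i%:Z.
  by rewrite PoszM; lia.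
by rewrite modzMDl.
Qed.

End ResidueClassCount.

Lemma exists_class_seq d k M i : (0 < d)%N -> (0 < k)%N ->
  exists S : seq (site d), [/\ uniq S,
    {in S, forall z, box d M z /\ Aset d i k z} &
    size S = ((2 * M + 1) %/ k * (2 * M + 1) ^ (d - 1))%N].
Proof.
case: d => [//|d] _ k_gt0.
pose free := {: 'I_((2 * M + 1) %/ k) * {ffun 'I_d -> 'I_(2 * M + 1)}}.
exists (map (@class_site d k M i) (enum free)); split.
- by rewrite map_inj_uniq ?enum_uniq //; exact: class_site_inj.
- by move=> _ /mapP [p _ ->]; split; [exact: class_site_box | exact: class_site_Aset].
- by rewrite size_map -cardT card_prod card_ffun !card_ord subSS subn0.
Qed.

Lemma expn5_le_expn8 d : (2 <= d)%N -> (16 * 5 ^ d <= 7 * 8 ^ d)%N.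
Proof.
elim: d => [//|d IH]; rewrite leq_eqVlt => /orP [/eqP <- //|].
rewrite ltnS => /IH le58; rewrite !expnS mulnCA (mulnCA 7).
exact: leq_trans (leq_mul (leqnn 5) le58) (leq_mul _ (leqnn _)).
Qed.

(* The right-hand side is [k] times the length of the sequence of
   [exists_class_seq]. *)
Lemma class_count_ge d k M N : (2 <= d)%N -> (0 < k)%N -> (4 * k <= M)%N ->
  (4 * N <= 5 * M)%N ->
  (2 * N ^ d <= (2 * M + 1) %/ k * (2 * M + 1) ^ (d - 1) * k)%N.
Proof.
move=> d_ge2 k_gt0 kM NM.
set A := ((2 * M + 1) %/ k * k)%N.
have MA : (7 * M <= 4 * A)%N.
  rewrite /A; have := divn_eq (2 * M + 1) k; have := ltn_pmod (2 * M + 1) k_gt0.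
  by move: ((2 * M + 1) %/ k * k)%N ((2 * M + 1) %% k)%N => a r; lia.
set X := ((2 * M + 1) ^ (d - 1))%N.
have MX : (7 * (2 * M) ^ d <= 8 * (A * X))%N.
  have -> : ((2 * M) ^ d = 2 * M * (2 * M) ^ (d - 1))%N.
    by rewrite -expnS subn1 prednK // (leq_trans _ d_ge2).
  have : ((2 * M) ^ (d - 1) <= X)%N by rewrite leq_exp2r ?subn_gt0 // leq_addr.
  move: ((2 * M) ^ (d - 1))%N X => Y Z YZ.
  have -> : (7 * (2 * M * Y) = 2 * (7 * M * Y))%N by ring.
  have -> : (8 * (A * Z) = 2 * (4 * A * Z))%N by ring.
  by rewrite leq_pmul2l // leq_mul.
have NM_d : ((4 * N) ^ d <= (5 * M) ^ d)%N by rewrite leq_exp2r // (leq_trans _ d_ge2).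
rewrite mulnAC -/A -(@leq_pmul2l (8 * 4 ^ d)) ?muln_gt0 ?expn_gt0 //.
have -> : (8 * 4 ^ d * (2 * N ^ d) = 16 * (4 * N) ^ d)%N by rewrite expnMn; ring.
apply: (leq_trans (leq_mul (leqnn 16) NM_d)); rewrite expnMn mulnA.
apply: (leq_trans (leq_mul (expn5_le_expn8 d_ge2) (leqnn (M ^ d)))).
have -> : (7 * 8 ^ d * M ^ d = 4 ^ d * (7 * (2 * M) ^ d))%N.
  by rewrite (_ : 8 = 4 * 2)%N // !expnMn; ring.
by rewrite -mulnA (mulnCA 8) leq_mul2l MX orbT.
Qed.

Fixpoint radius (N0 j : nat) : nat :=
  if j is j'.+1 then radius N0 j' + radius N0 j' %/ 4 else N0.

Section Radius.
Variable N0 : nat.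
Hypothesis N0_ge8 : (8 <= N0)%N.
Local Notation N := (radius N0).

Lemma radius_ge j : (N0 <= N j)%N.
Proof. by elim: j => //= j IH; apply: leq_trans IH (leq_addr _ _). Qed.

Lemma radius_lt j : (N j < N j.+1)%N.
Proof.
rewrite /= -{1}(addn0 (N j)) ltn_add2l divn_gt0 //.
exact: leq_trans (leq_trans _ N0_ge8) (radius_ge j).
Qed.

Lemma radius_mono : {homo N : j j' / (j <= j')%N}.
Proof.
by apply: homo_leq => // [j j' j'' /leq_trans|j]; [apply|exact: ltnW (radius_lt j)].
Qed.

Lemma radiusS_le j : (4 * N j.+1 <= 5 * N j)%N.
Proof. by rewrite /=; have := leq_trunc_div (N j) 4; move: (N j) (N j %/ 4)%N => x q; lia. Qed.

Lemma radiusS_ge j : (9 * N j <= 8 * N j.+1)%N.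
Proof.
rewrite /=; have := divn_eq (N j) 4; have := ltn_pmod (N j) (isT : 0 < 4)%N.
have := leq_trans N0_ge8 (radius_ge j).
by move: (N j) (N j %/ 4)%N (N j %% 4)%N => x q r; lia.
Qed.

Lemma radius_bracket J n : (N J <= n)%N ->
  exists j, [/\ (J <= j)%N, (N j <= n)%N & (n <= N j.+1)%N].
Proof.
move=> NJn; have exN : exists j, (N j <= n)%N by exists J.
have ubN j : (N j <= n)%N -> (j <= n)%N.
  apply: leq_trans; elim: j => //= j IH; have := radius_lt j; rewrite /=; lia.
have [j /= Njn maxj] := ex_maxnP exN ubN; exists j; split => //; first exact: maxj.
by rewrite leqNgt; apply/negP => /ltnW /(maxj j.+1); rewrite ltnn.
Qed.

Lemma radius_expr_ge (R : realType) j : (9 / 8 : R) ^+ j <= (N j)%:R.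
Proof.
elim: j => [|j IH]; first by rewrite expr0 ler1n (leq_trans _ N0_ge8).
have := radiusS_ge j; rewrite -(ler_nat R) !natrM => le98.
rewrite exprS; apply: (le_trans (ler_wpM2l _ IH)) => //.
by rewrite -(@ler_pM2l _ 8) // mulrA mulrCA divff // mulr1.
Qed.

End Radius.

Section RealBounds.
Variable R : realType.

Lemma sum_inv_sq_le n : \sum_(j < n) ((j.+1%:R : R) ^+ 2)^-1 <= 2 - 2 / n.+1%:R.
Proof.
elim: n => [|n IH]; first by rewrite big_ord0 divr1 subrr.
rewrite big_ord_recr /=; apply: (le_trans (lerD IH (lexx _))).
set x : R := n.+1%:R; have x_gt0 : 0 < x by rewrite ltr0n.
have -> : n.+2%:R = x + 1 by rewrite -natr1.
rewrite -subr_ge0; have x_ge1 : 1 <= x by rewrite ler1n.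
clearbody x.
have -> : 2 - 2 / (x + 1) - (2 - 2 / x + (x ^+ 2)^-1) = (x - 1) / (x ^+ 2 * (x + 1)).
  by field; rewrite !gt_eqF ?addr_gt0.
by apply: divr_ge0; rewrite ?subr_ge0 // mulr_ge0 ?exprn_ge0 ?addr_ge0 // ltW.
Qed.

Lemma nneseries_inv_sq_lty (C : R) : 0 <= C ->
  (\sum_(0 <= j <oo) (C * ((j.+1%:R : R) ^+ 2)^-1)%:E < +oo)%E.
Proof.
move=> C_ge0; apply: (@le_lt_trans _ _ (C * 2)%:E); last exact: ltry.
apply: lime_le.
  by apply: is_cvg_nneseries => n _ _; rewrite lee_fin mulr_ge0 // invr_ge0 exprn_ge0.
apply: nearW => n; rewrite sumEFin lee_fin big_mkord -mulr_sumr ler_wpM2l //.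
by apply: (le_trans (sum_inv_sq_le n)); rewrite lerBlDr lerDl divr_ge0.
Qed.

Lemma expr1B_le_expR (r : R) (s : nat) : 0 <= r <= 1 ->
  (1 - r) ^+ s <= expR (- (s%:R * r)).
Proof.
case/andP => r_ge0 r_le1; rewrite -mulrN expRM_natl.
by apply: lerXn2r; rewrite ?nnegrE ?subr_ge0 ?expR_ge0 // expR_ge1Dx.
Qed.

End RealBounds.

Section Independence.
Context (R : realType) (d : nat) (dT : measure_display) (T : measurableType dT)
  (P : probability T R) (mu : probability R R) (w : edge d -> T -> R).
Hypotheses (hw_meas : forall e, measurable_fun setT (w e))
  (hw_law : forall e B, measurable B -> P (w e @^-1` B) = mu B)
  (hw_indep : mutually_independent P w).

Definition p_low (a : R) : R := fine (mu `]-oo, a]%classic).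

Lemma p_low_ge0 a : 0 <= p_low a.
Proof. by rewrite fine_ge0 // measure_ge0. Qed.

Lemma p_low_le1 a : p_low a <= 1.
Proof.
by rewrite -lee_fin fineK ?fin_num_measure ?probability_le1 //; apply: measurable_itv.
Qed.

Definition low_on (a : R) (L : seq (edge d)) : set T :=
  \bigcap_(e in [set e | e \in L]) w e @^-1` `]-oo, a]%classic.

Definition J_all (a : R) (S : seq (site d)) : set T :=
  \bigcap_(z in [set z | z \in S]) J_at w a z.

Lemma measurable_low_on a L : measurable (low_on a L).
Proof.
apply: countable_bigcap_measurable => e _.
by rewrite -[X in measurable X]setTI; apply: hw_meas.
Qed.

Lemma low_on_nil a : low_on a [::] = setT.
Proof. by apply/seteqP; split => // om _ e. Qed.

Lemma low_on_cat a L L' : low_on a (L ++ L') = low_on a L `&` low_on a L'.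
Proof.
apply/seteqP; split => om /=.
  by move=> low; split=> e eL; apply: low; rewrite /= mem_cat eL ?orbT.
by move=> [lowL lowL'] e; rewrite /= mem_cat => /orP [/lowL|/lowL'].
Qed.

Lemma J_atE a z : J_at w a z = ~` low_on a (incident z).
Proof.
apply/seteqP; split => om /=.
  move=> [e [/mem_incident ze lt_a]] low.
  by have := low e ze; rewrite /= in_itv /= leNgt lt_a.
move=> not_low; apply: contrapT => notJ; apply: not_low => e /= /mem_incident ze.
by rewrite /= in_itv /= leNgt; apply/negP => lt_a; apply: notJ; exists e.
Qed.

Lemma J_at_le a b z om : b <= a -> J_at w a z om -> J_at w b z om.
Proof. by move=> ba [e [ze lt_a]]; exists e; split => //; apply: le_lt_trans lt_a. Qed.

Lemma pi_at_le a z om : ~ J_at w a z om -> pi_at w z om <= 2 * d%:R * a.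
Proof.
move=> notJ; have low e : endpoint z e -> w e om <= a.
  by move=> ze; rewrite leNgt; apply/negP => lt_a; apply: notJ; exists e.
rewrite /pi_at (@le_trans _ _ (\sum_(i < d) (a + a))) //.
  apply: ler_sum => i _; apply: lerD; apply: low; [by left | right].
  by rewrite /= shiftpD addNr shiftp0.
rewrite sumr_const card_ord -[X in X <= _]mulr_natr.
by have -> : (a + a) * d%:R = 2 * d%:R * a by ring.
Qed.

Lemma measurable_J_at a z : measurable (J_at w a z).
Proof. by rewrite J_atE; apply/measurableC/measurable_low_on. Qed.

Lemma measurable_J_all a S : measurable (J_all a S).
Proof. by apply: countable_bigcap_measurable => z _; apply: measurable_J_at. Qed.

Lemma measurable_pi_at z : measurable_fun setT (pi_at w z).
Proof.
by apply: measurable_sum => i; apply: measurable_realfun.measurable_funD; apply: hw_meas.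
Qed.

Lemma J_all_nil a : J_all a [::] = setT.
Proof. by apply/seteqP; split => // om _ z. Qed.

Lemma J_all_cons a z S : J_all a (z :: S) = J_at w a z `&` J_all a S.
Proof.
apply/seteqP; split => om /=.
  by move=> J; split=> [|y yS]; apply: J; rewrite /= inE ?eqxx ?yS ?orbT.
by move=> [Jz JS] y; rewrite /= inE => /orP [/eqP ->|/JS].
Qed.

Lemma pr_low_on a L : uniq L -> P (low_on a L) = (p_low a ^+ size L)%:E.
Proof.
move=> uL; rewrite /low_on hw_indep //.
rewrite (eq_bigr (fun=> (p_low a)%:E)) => [|e _]; last first.
  by rewrite hw_law // fineK // fin_num_measure.
by rewrite prodEFin big_const_seq count_predT iter_mulr_1.
Qed.

(* Induction on [S], strengthened by a cylinder [low_on a L] on edges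
   disjoint from the neighbourhood of [S]: removing [low_on a (incident z)]
   from the event only enlarges the cylinder. *)
Lemma pr_low_on_J_all a L S : uniq (L ++ nbhd S) ->
  P (low_on a L `&` J_all a S) =
  (p_low a ^+ size L * (1 - p_low a ^+ (2 * d)) ^+ size S)%:E.
Proof.
elim: S L => [|z S IH] L /= uLS.
  by rewrite J_all_nil setIT pr_low_on ?mulr1 // -(cats0 L).
have uL : uniq (L ++ nbhd S).
  by move: uLS; rewrite uniq_catCA cat_uniq => /and3P [].
have uLz : uniq ((L ++ incident z) ++ nbhd S) by rewrite -catA.
have mLS : measurable (low_on a L `&` J_all a S).
  by apply: measurableI; [apply: measurable_low_on | apply: measurable_J_all].
have -> : P (low_on a L `&` J_all a (z :: S)) =
    (P (low_on a L `&` J_all a S) -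
     P (low_on a (L ++ incident z) `&` J_all a S))%E.
  rewrite J_all_cons J_atE setIA setIAC -setDE measureD //.
  - by rewrite setIAC -low_on_cat.
  - exact: measurable_low_on.
  - exact: le_lt_trans (probability_le1 P mLS) (ltry 1).
rewrite !IH // -EFinB size_cat size_incident exprD exprS; congr (_%:E); ring.
Qed.

Lemma pr_J_all a S : uniq (nbhd S) ->
  P (J_all a S) = ((1 - p_low a ^+ (2 * d)) ^+ size S)%:E.
Proof.
by move=> uS; have := @pr_low_on_J_all a [::] S uS; rewrite low_on_nil setTI mul1r.
Qed.

End Independence.

Section LowSites.
Context (R : realType) (d : nat) (dT : measure_display) (T : measurableType dT)
  (P : probability T R) (mu : probability R R) (w : edge d -> T -> R).
Hypotheses (hw_meas : forall e, measurable_fun setT (w e))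
  (hw_law : forall e B, measurable B -> P (w e @^-1` B) = mu B)
  (hw_indep : mutually_independent P w).
Variables (g : R -> R) (k : nat) (eps : R) (nstar : nat).
Hypotheses (hd : (2 <= d)%N) (hk : (2 <= k)%N) (eps_gt0 : 0 < eps)
  (hg_mono : forall u v, 0 < u -> u <= v -> g v <= g u)
  (hLam : forall n : nat, (nstar <= n)%N ->
     k%:R + eps <= Lambda mu g d n%:R / ln (ln n%:R)).

Let d_gt0 : (0 < d)%N. Proof. exact: leq_trans hd. Qed.
Let k_gt0 : (0 < k)%N. Proof. exact: leq_trans hk. Qed.

Lemma Lambda_lnln n : (nstar <= n)%N ->
  0 < ln (ln n%:R) :> R /\ k%:R * ln (ln n%:R) <= n%:R ^+ d * p_low mu (g n%:R) ^+ (2 * d).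
Proof.
move=> n_ge; have := hLam n_ge; rewrite /Lambda -/(p_low mu (g n%:R)).
set l := ln (ln _); set L := n%:R ^+ d * _; move=> kL.
have L_ge0 : 0 <= L by rewrite mulr_ge0 ?exprn_ge0 ?p_low_ge0.
have l_gt0 : 0 < l.
  rewrite ltNge; apply/negP => l_le0; move: kL; apply/negP; rewrite -ltNge.
  by apply: le_lt_trans (mulr_ge0_le0 L_ge0 _) _; rewrite ?invr_le0 ?addr_gt0 ?ltr0n.
split => //; rewrite -ler_pdivlMr //; apply: le_trans kL.
by rewrite lerDl ltW.
Qed.

Definition J_class (i n : nat) : set T :=
  [set om | forall z, box d n z -> Aset d i k z -> J_at w (g n%:R) z om].

Lemma measurable_J_class i n : measurable (J_class i n).
Proof.
rewrite (_ : J_class i n =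
    \bigcap_(z in [set z | box d n z /\ Aset d i k z]) J_at w (g n%:R) z).
  by apply: countable_bigcap_measurable => z _; exact: measurable_J_at hw_meas _ _.
by apply/seteqP; split => om /= J; [move=> z [] | move=> z bz az]; apply: J.
Qed.

Local Notation N := (radius (nstar + 4 * k + 8)).

Let N0_ge8 : (8 <= nstar + 4 * k + 8)%N. Proof. exact: leq_addl. Qed.

Definition class_seq i j : seq (site d) :=
  sval (cid (exists_class_seq (N j) i d_gt0 k_gt0)).

Lemma class_seqP i j : [/\ uniq (class_seq i j),
  {in class_seq i j, forall z, box d (N j) z /\ Aset d i k z} &
  size (class_seq i j) = ((2 * N j + 1) %/ k * (2 * N j + 1) ^ (d - 1))%N].
Proof. by rewrite /class_seq; case: cid. Qed.

Definition J_class_seq i j : set T := J_all w (g (N j.+1)%:R) (class_seq i j).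

(* [(1 - r)^s <= exp (- s r)], and [s r >= 2 log log N_(j+1)] because the
   class has [>= 2 N_(j+1)^d / k] sites while [k log log N <= N^d r]. *)
Lemma pr_J_class_seq_le i j :
  (P (J_class_seq i j) <= ((ln (N j.+1)%:R ^+ 2)^-1)%:E)%E.
Proof.
have [uS inS sizeS] := class_seqP i j.
rewrite (pr_J_all hw_meas hw_law hw_indep) // ?lee_fin; last first.
  apply: uniq_nbhd => // z z' /inS [_ Az] /inS [_ Az'] e.
  exact: (Aset_endpoint_eq hk Az Az').
set N' := N j.+1; set r := _ ^+ (2 * d); set s := size _.
have [l_gt0 kl] : 0 < ln (ln N'%:R) :> R /\ k%:R * ln (ln N'%:R) <= N'%:R ^+ d * r.
  by apply: Lambda_lnln; apply: leq_trans (radius_ge _ _); rewrite -addnA leq_addr.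
have r01 : 0 <= r <= 1 by rewrite exprn_ge0 ?exprn_ile1 ?p_low_ge0 ?p_low_le1.
have sk : 2 * N'%:R ^+ d <= s%:R * k%:R :> R.
  rewrite -natrX -!natrM ler_nat /s sizeS class_count_ge ?radiusS_le //.
  by apply: leq_trans (radius_ge _ _); lia.
have sr : 2 * ln (ln N'%:R) <= s%:R * r.
  have k_gt0R : 0 < k%:R :> R by rewrite ltr0n.
  by have r_ge0 := proj1 (andP r01); nra.
have lnN_gt0 : 0 < ln N'%:R :> R.
  by apply: lt_trans ltr01 _; rewrite ltNge; apply/negP => /ln_le0; rewrite leNgt l_gt0.
apply: le_trans (expr1B_le_expR _ r01) _.
apply: le_trans (_ : expR (- (2 * ln (ln N'%:R))) <= _); first by rewrite ler_expR lerN2.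
by rewrite expRN expRM_natl lnK ?posrE.
Qed.

Lemma ln_radius_ge j : ln (9 / 8 : R) * j%:R <= ln (N j)%:R.
Proof.
rewrite mulr_natr -lnXn; last by lra.
have N_gt0 : 0 < (N j)%:R :> R.
  by rewrite ltr0n (leq_trans _ (radius_ge _ _)) // addn_gt0 orbT.
by rewrite ler_ln ?posrE ?exprn_gt0 ?radius_expr_ge //; lra.
Qed.

Lemma pr_J_class_seq_le_inv_sq i j :
  (P (J_class_seq i j) <= ((ln (9 / 8 : R) ^+ 2)^-1 * (j.+1%:R ^+ 2)^-1)%:E)%E.
Proof.
apply: le_trans (pr_J_class_seq_le i j) _; rewrite lee_fin -invfM -exprMn.
have ln98_gt0 : 0 < ln (9 / 8 : R) by apply: ln_gt0; lra.
have lnj_gt0 : 0 < ln (9 / 8 : R) * j.+1%:R by rewrite mulr_gt0 ?ltr0n.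
rewrite lef_pV2 ?posrE ?exprn_gt0 //; last exact: lt_le_trans (ln_radius_ge _).
by rewrite lerXn2r ?nnegrE ?ln_radius_ge ?ltW // (lt_le_trans _ (ln_radius_ge _)).
Qed.

Lemma limsup_J_class_sub i : limsup_ev (J_class i) `<=` lim_sup_set (J_class_seq i).
Proof.
move=> om Jom J _; have [n /= Jn Jn_om] := Jom (N J) I.
have [j [Jj Njn nNj]] := radius_bracket N0_ge8 Jn.
have [_ inS _] := class_seqP i j; exists j => // z /= /inS [bz Az].
apply: J_at_le (Jn_om z _ Az); last by move=> l; apply: le_trans (bz l) _; rewrite lez_nat.
apply: hg_mono; last by rewrite ler_nat.
by rewrite ltr0n (leq_trans _ Njn) // (leq_trans _ (radius_ge _ _)) // addn_gt0 orbT.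
Qed.

Lemma pr_limsup_J_class i : P (limsup_ev (J_class i)) = 0%E.
Proof.
have mJ j : measurable (J_class_seq i j) by apply: measurable_J_all hw_meas _ _.
have mJ_class : measurable (limsup_ev (J_class i)).
  by apply: measurable_limsup_ev => n; apply: measurable_J_class.
have := subset_measure0 mJ_class (measurable_limsup_ev mJ) (@limsup_J_class_sub i).
have C_ge0 : 0 <= (ln (9 / 8 : R) ^+ 2)^-1 by rewrite invr_ge0 sqr_ge0.
apply; apply: lim_sup_set_cvg0 => //; apply: le_lt_trans (nneseries_inv_sq_lty C_ge0).
by apply: lee_nneseries => [n _ _|n _]; [apply: measure_ge0 | apply: pr_J_class_seq_le_inv_sq].
Qed.

Definition k_low_sites n : set T :=
  [set om | exists f : 'I_k -> site d, injective f /\ forall j,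
     box d n (f j) /\ pi_at w (f j) om <= 2 * d%:R * g n%:R].

Lemma measurable_k_low_sites n : measurable (k_low_sites n).
Proof.
rewrite (_ : k_low_sites n = \bigcup_(f in [set f : {ffun 'I_k -> site d} |
     injective f /\ forall j, box d n (f j)])
     \bigcap_(j in [set: 'I_k]) (pi_at w (f j) @^-1` `]-oo, 2 * d%:R * g n%:R]%classic)).
  apply: countable_bigcup_measurable => f _; apply: countable_bigcap_measurable => j _.
  by rewrite -[X in measurable X]setTI; apply: measurable_pi_at => //; apply: measurable_itv.
apply/seteqP; split => om /=.
- move=> [f [f_inj fP]]; exists (finfun f).
    by split=> [x y|j]; rewrite !ffunE; [apply: f_inj | have [] := fP j].
  by move=> j _; rewrite /= ffunE in_itv /=; have [] := fP j.
- move=> [f [f_inj bf] fP]; exists f; split => // j; split => //.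
  by have := fP j I; rewrite /= in_itv.
Qed.

Lemma not_k_low_sites_sub n : ~` k_low_sites n `<=` \bigcup_(i : 'I_k) J_class i.+1 n.
Proof.
move=> om notH; apply: contrapT => notJ; apply: notH.
have site_of (i : 'I_k) : exists z,
    [/\ box d n z, Aset d i.+1 k z & ~ J_at w (g n%:R) z om].
  apply: contrapT => noz; apply: notJ; exists i => // z bz Az.
  by apply: contrapT => nJz; apply: noz; exists z.
have [f fP] := choice site_of; exists f; split => [i i' fii'|i].
  have [_ Ai _] := fP i; have [_ Ai' _] := fP i'; rewrite fii' in Ai.
  apply: val_inj; move: (Aset_mod Ai Ai'); rewrite -[i.+1]addn1 -[i'.+1]addn1 => /eqP.
  by rewrite eqn_modDr !modn_small // => /eqP.
by have [bz _ nJ] := fP i; split => //; apply: pi_at_le.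
Qed.

Lemma pr_limsup_not_k_low_sites : P (limsup_ev (fun n => ~` k_low_sites n)) = 0%E.
Proof.
have null : P.-negligible (\bigcup_i limsup_ev (J_class i)).
  apply: negligible_bigcup => i; apply/negligibleP; last exact: pr_limsup_J_class.
  by apply: measurable_limsup_ev => n; apply: measurable_J_class.
have mH : measurable (limsup_ev (fun n => ~` k_low_sites n)).
  by apply: measurable_limsup_ev => n; apply/measurableC/measurable_k_low_sites.
apply/(negligibleP _ mH).
apply: negligibleS null => om Hom.
have J_often : limsup_ev (fun n => \bigcup_(i : 'I_k) J_class i.+1 n) om.
  by move=> n _; have [m nm notH] := Hom n I; exists m => //; apply: not_k_low_sites_sub.
by have [i _ Ji] := limsup_ev_bigcup J_often; exists i.+1.
Qed.

End LowSites.

Theorem lemma2p5 (R : realType) (d : nat) (hd : (2 <= d)%N)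
  (dT : measure_display) (T : measurableType dT) (P : probability T R)
  (mu : probability R R) (w : edge d -> T -> R)
  (hw_meas : forall e, measurable_fun setT (w e))
  (hw_pos : forall e om, 0 < w e om)
  (hw_law : forall e B, measurable B -> P (w e @^-1` B) = mu B)
  (hw_indep : mutually_independent P w)
  (g : R -> R)
  (hg_pos : forall u, 0 < u -> 0 < g u)
  (hg_mono : forall u v, 0 < u -> u <= v -> g v <= g u)
  (hg_lim : g x @[x --> +oo] --> 0)
  (k : nat) (hk : (2 <= k)%N)
  (hLam : exists2 eps : R, 0 < eps &
          exists nstar : nat, forall n : nat, (nstar <= n)%N ->
            k%:R + eps <= Lambda mu g d n%:R / ln (ln n%:R)) :
  (forall i : nat, (1 <= i <= k)%N ->
     P (limsup_ev (fun n : nat =>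
          [set om | forall z, box d n z -> Aset d i k z ->
                      J_at w (g n%:R) z om])) = 0%E)
  /\
  P (limsup_ev (fun n : nat =>
       ~` [set om | exists f : 'I_k -> site d, injective f /\
              forall j, box d n (f j) /\
                        pi_at w (f j) om <= 2 * d%:R * g n%:R])) = 0%E.
Proof.
have [eps eps_gt0 [nstar hLam_n]] := hLam.
split => [i _|].
- exact: (pr_limsup_J_class hw_meas hw_law hw_indep hd hk eps_gt0 hg_mono hLam_n i).
- exact: (pr_limsup_not_k_low_sites hw_meas hw_law hw_indep hd hk eps_gt0 hg_mono hLam_n).
Qed.
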